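(* Let $V,W$ be finite-dimensional real vector spaces and let $A(\xi):V\to W$ be a homogeneous symbol on $\mathbb{R}^d$ (matrix entries homogeneous polynomials of a common degree with real coefficients). Denote by $A(\xi)_{\mathbb C}:V_{\mathbb C}\to W_{\mathbb C}$ its complexification, regarded as a polynomial in complex variables $\xi\in\mathbb{C}^d$. The following are equivalent: (1) $\operatorname{rank}_{\mathbb C}A(\xi)_{\mathbb C}$ is constant on $\mathbb{C}^d\setminus\{0\}$; (2) there exist finite-dimensional real vector spaces $U,X$ and homogeneous symbols $B(\xi):U\to V$, $Q(\xi):W\to X$ on $\mathbb{R}^d$ with real coefficients, forming a symbol complex $U\xrightarrow{B(\xi)}V\xrightarrow{A(\xi)}W\xrightarrow{Q(\xi)}X$, such that $$\operatorname{im}B(\xi)_{\mathbb C}=\ker A(\xi)_{\mathbb C}\quad\text{and}\quad \operatorname{im}A(\xi)_{\mathbb C}=\ker Q(\xi)_{\mathbb C}\qquad\text{for all }\xi\in\mathbb{C}^d\setminus\{0\}.$$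
   Context: For a real vector space $V$, $V_{\mathbb C}=\mathbb{C}\otimes_{\mathbb R}V=V\oplus iV$; for a real linear map $f:V\to W$, $f_{\mathbb C}(v_1+iv_2)=f(v_1)+if(v_2)$. The complexification of a symbol $A(\xi)$ on $\mathbb{R}^d$ is $A(\xi)_{\mathbb C}$, with the polynomial entries evaluated at complex $\xi$. *)

From HB Require Import structures.
From mathcomp Require Import all_boot all_order all_algebra.
From mathcomp Require Import mpoly.
From mathcomp Require Import complex.
From mathcomp Require Import reals.
Set Implicit Arguments. Unset Strict Implicit. Unset Printing Implicit Defensive.
Import Order.TTheory GRing.Theory Num.Theory.
Local Open Scope ring_scope.

(* Convention: linear maps act on ROW vectors (mathcomp's
   convention), so a map V -> W with dim V = n, dim W = m is an n x m
   matrix M, acting by x |-> x *m M.  Composition "first B then A" is B *m A. *)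
Definition symbol (R : realType) (d n m : nat) := 'M[{mpoly R[d]}]_(n, m).

Definition homogeneous_symbol (R : realType) (d n m : nat) (A : symbol R d n m) :=
  exists k : nat, forall i j, A i j \is k.-homog.

Definition csymbol (R : realType) (d n m : nat) (A : symbol R d n m)
  (xi : 'I_d -> complex R) : 'M[complex R]_(n, m) :=
  \matrix_(i, j) mmap (fun r : R => (r%:C)%C) xi (A i j).

(* (1) -> (2): if [S = P A Q] is a nonsingular [r x r] minor of a matrix [A] of
   rank [r], then [K = det S - A Q adj(S) P] satisfies [K A = 0] and its rows span
   [ker A].  When [A(xi)] has constant rank [r], [K(xi) A(xi) = 0] holds wherever
   [det S(xi) <> 0], hence identically in [xi].  Stacking [K] over all
   choices of [r] rows and columns gives a homogeneous [B] with [im B = ker A] at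
   every [xi <> 0], and [Q] is the same construction applied to [A^T].
   (2) -> (1): exactness gives [rank B(xi) + rank A(xi) = dim V].  Both ranks at
   [xi1] are lower bounds on a nonempty Zariski open set, on which the fixed sum
   forces [rank A = rank A(xi1)]; two nonempty Zariski open sets meet, so
   [rank A] is constant on [xi <> 0]. *)

From HB Require Import structures.
From mathcomp Require Import all_boot all_order all_algebra.
From mathcomp Require Import mpoly complex reals.
From Stdlib Require Import Classical FunctionalExtensionality.
From mathcomp Require Import zify.
Import Order.TTheory GRing.Theory Num.Theory.
Set Implicit Arguments. Unset Strict Implicit. Unset Printing Implicit Defensive.
Local Open Scope ring_scope.

Lemma mmap_rmorph n (R : nzRingType) (S T : comNzRingType) (f : R -> S)
    (h : 'I_n -> S) (phi : {rmorphism S -> T}) (p : {mpoly R[n]}) :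
  phi (mmap f h p) = mmap (phi \o f) (phi \o h) p.
Proof.
rewrite /mmap rmorph_sum; apply: eq_bigr => m _.
rewrite rmorphM /mmap1 rmorph_prod; congr (_ * _).
by apply: eq_bigr => i _; rewrite rmorphXn.
Qed.

Lemma eq_mmap n (R S : nzRingType) (f1 f2 : R -> S) (h : 'I_n -> S) :
  f1 =1 f2 -> mmap f1 h =1 mmap f2 h.
Proof. by move=> ef p; apply: eq_bigr => m _; rewrite ef. Qed.

(* [muni] is an [mmap] whose variable assignment is a section-local [Let] of
   the library; its existence is all we need. *)
Lemma muni_mmap n (R : comNzRingType) : exists X : 'I_n.+1 -> {poly {mpoly R[n]}},
  forall p, muni p = mmap (polyC \o @mpolyC n R) X p.
Proof. by eexists => p; reflexivity. Qed.

Lemma mcoeff_muni (R : nzRingType) n (p : {mpoly R[n.+1]}) (m : 'X_{1..n.+1}) :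
  ((muni p)`_(m ord_max))@_[multinom m (widen_ord (leqnSn n) i) | i < n] = p@_m.
Proof.
rewrite muniE coef_sum (raddf_sum (mcoeff _)) {3}(mpolyE p) (raddf_sum (mcoeff m)).
apply: eq_bigr => k _ /=; rewrite coefZ coefXn mcoeffZ mcoeffX.
have -> : (k == m) = (m ord_max == k ord_max) &&
   ([multinom k (widen_ord (leqnSn n) i) | i < n] ==
    [multinom m (widen_ord (leqnSn n) i) | i < n]).
  apply/eqP/andP => [->|[/eqP ekm /eqP ek'm']]; first by split.
  apply/mnmP => i; have [j ->|->] := unliftP ord_max i; last by [].
  have := congr1 (fun m' : 'X_{1..n} => m' j) ek'm'; rewrite !mnmE.
  by have -> : lift ord_max j = widen_ord (leqnSn n) j by apply/val_inj/lift_max.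
case: eqP => _ /=; last by rewrite mulr0 mcoeff0 mulr0.
by rewrite mulr1 mcoeffZ mcoeffX.
Qed.

Section Vanishing.
Variable R : numDomainType.

Lemma poly_eq0_of_horner (q : {poly R}) : (forall t, q.[t] = 0) -> q = 0.
Proof.
move=> q0; apply: (@roots_geq_poly_eq0 _ q [seq i%:R | i <- iota 0 (size q)]).
- by apply/allP => x _; rewrite /root q0.
- by rewrite map_inj_uniq ?iota_uniq //; apply: (mulrIn (oner_neq0 R)).
- by rewrite size_map size_iota.
Qed.

Lemma mpoly_eq0_of_meval n (p : {mpoly R[n]}) : (forall v, p.@[v] = 0) -> p = 0.
Proof.
elim: n p => [|n IH] p p0.
  by have := p0 (fun=> 0); rewrite (nvar0_mpolyC p) mevalC => ->.
have [X muni_subst] := muni_mmap n R.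
have muni_coef0 k : (muni p)`_k = 0.
  apply: IH => v; suff /(congr1 (coefp k)) : map_poly (meval v) (muni p) = 0.
    by rewrite /= coef_map coef0.
  apply: poly_eq0_of_horner => t.
  rewrite -horner_evalE muni_subst -[LHS]/((horner_eval t \o map_poly (meval v)) _).
  rewrite mmap_rmorph -[RHS](p0 (horner_eval t \o map_poly (meval v) \o X)).
  by apply: eq_mmap => c /=; rewrite map_polyC horner_evalE hornerC; apply: mevalC.
by apply/mpolyP => m; rewrite -mcoeff_muni muni_coef0 !mcoeff0.
Qed.

End Vanishing.

Definition adjker (R : comNzRingType) n m r (A : 'M[R]_(n, m)) (P : 'M_(r, n))
    (Q : 'M_(m, r)) : 'M_n :=
  (\det (P *m A *m Q))%:M - A *m Q *m \adj (P *m A *m Q) *m P.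

Lemma map_adjker (R S : comNzRingType) (f : {rmorphism R -> S}) n m r
    (A : 'M[R]_(n, m)) (P : 'M_(r, n)) (Q : 'M_(m, r)) :
  map_mx f (adjker A P Q) = adjker (map_mx f A) (map_mx f P) (map_mx f Q).
Proof.
by rewrite map_mxB !map_mxM map_scalar_mx -det_map_mx map_mx_adj !map_mxM.
Qed.

Lemma map_mxcol (R S : Type) (f : R -> S) k (p_ : 'I_k -> nat) m
    (B_ : forall i, 'M[R]_(p_ i, m)) :
  map_mx f (\mxcol_i B_ i) = \mxcol_i map_mx f (B_ i).
Proof. by apply/matrixP => i j; rewrite !mxE. Qed.

Section AdjugateKernel.
Variables (F : fieldType) (n m r : nat).
Variables (A : 'M[F]_(n, m)) (P : 'M[F]_(r, n)) (Q : 'M[F]_(m, r)).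
Hypothesis unit_minor : P *m A *m Q \in unitmx.

(* Since [P *m A] already has rank [r >= \rank A], it spans the rows of [A]. *)
Lemma adjker_mul0 : (\rank A <= r)%N -> adjker A P Q *m A = 0.
Proof.
move=> rankA; have PA_sub : (P *m A <= A)%MS by apply: submxMl.
have : (A <= P *m A)%MS.
  rewrite -(eq_leqif (mxrank_leqif_sup PA_sub)) eqn_leq (mxrankS PA_sub) /=.
  by rewrite (leq_trans rankA) // -{1}(mxrank_unit unit_minor) mxrankM_maxl.
case/submxP=> T defA; rewrite /adjker mulmxBl mul_scalar_mx; set S := P *m A *m Q.
have -> : A *m Q *m \adj S *m P *m A = \det S *: A.
  by rewrite {1}defA -2!(mulmxA T) mul_mx_adj mul_mx_scalar -!scalemxAl -(mulmxA T) -defA.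
by rewrite subrr.
Qed.

Lemma kermx_sub_adjker : (kermx A <= adjker A P Q)%MS.
Proof.
have detS_neq0 : \det (P *m A *m Q) != 0 by rewrite -unitfE -unitmxE.
have kerK : kermx A *m adjker A P Q = \det (P *m A *m Q) *: kermx A.
  by rewrite mulmxBr mul_mx_scalar !mulmxA mulmx_ker !mul0mx subr0.
by rewrite -[kermx A](scalerK detS_neq0) -kerK scalemx_sub ?submxMl.
Qed.

End AdjugateKernel.

Lemma rank_unitmx_minor (F : fieldType) n m (A : 'M[F]_(n, m)) :
  exists (f : 'I_(\rank A) -> 'I_n) (g : 'I_(\rank A) -> 'I_m),
    rowsub f 1%:M *m A *m colsub g 1%:M \in unitmx.
Proof.
pose f := maxrankfun A; pose At := (rowsub f A)^T.
have fullAt : row_full At by rewrite /row_full mxrank_tr; apply: maxrowsub_free.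
exists f, (fullrankfun fullAt).
rewrite -rowsubE mulmx_colsub mulmx1 -[colsub _ _]trmxK unitmx_tr.
by have := fullrowsub_unit fullAt; congr (_ \in unitmx); apply/matrixP => i j; rewrite !mxE.
Qed.

Lemma eqmx_kermx_tr (F : fieldType) n m p (M : 'M[F]_(n, m)) (C : 'M[F]_(p, m)) :
  (C == kermx M^T)%MS -> (M == kermx C^T)%MS.
Proof.
move=> eqC; have /sub_kermxP CM0 : (C <= kermx M^T)%MS by case/andP: eqC.
have sMK : (M <= kermx C^T)%MS by rewrite sub_kermx -[M]trmxK -trmx_mul CM0 trmx0.
rewrite -(eq_leqif (mxrank_leqif_eq sMK)) mxrank_ker mxrank_tr (eqmx_rank eqC).
by rewrite mxrank_ker mxrank_tr subKn ?rank_leq_col.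
Qed.

Lemma submx_mxcol (F : fieldType) k (p_ : 'I_k -> nat) m
    (B_ : forall i, 'M[F]_(p_ i, m)) i :
  (B_ i <= \mxcol_i B_ i)%MS.
Proof. by rewrite eqmx_col (sumsmx_sup i) ?genmxE. Qed.

Section HomogeneousMatrix.
Variables (R : comNzRingType) (d : nat).
Implicit Types (k : nat).

Definition mxhomog k n m (M : 'M[{mpoly R[d]}]_(n, m)) :=
  forall i j, M i j \is k.-homog.

Lemma mxhomog0 k n m : mxhomog k (0 : 'M_(n, m)).
Proof. by move=> i j; rewrite mxE dhomog0. Qed.

Lemma mxhomogB k n m (M N : 'M_(n, m)) :
  mxhomog k M -> mxhomog k N -> mxhomog k (M - N).
Proof. by move=> hM hN i j; rewrite !mxE rpredB. Qed.

Lemma mxhomogM k1 k2 k n m p (M : 'M_(n, m)) (N : 'M_(m, p)) :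
  (k1 + k2)%N = k -> mxhomog k1 M -> mxhomog k2 N -> mxhomog k (M *m N).
Proof.
by move=> <- hM hN i j; rewrite mxE; apply: rpred_sum => l _; apply: dhomogM.
Qed.

Lemma mxhomog_tr k n m (M : 'M_(n, m)) : mxhomog k M -> mxhomog k M^T.
Proof. by move=> hM i j; rewrite mxE. Qed.

Lemma mxhomog_scalar k n (a : {mpoly R[d]}) :
  a \is k.-homog -> mxhomog k (a%:M : 'M_n).
Proof. by move=> ha i j; rewrite mxE rpredMn. Qed.

Lemma mxhomog_rowsub1 n r (f : 'I_r -> 'I_n) : mxhomog 0 (rowsub f 1%:M).
Proof. by move=> i j; rewrite !mxE rpredMn ?dhomog1. Qed.

Lemma mxhomog_colsub1 m r (g : 'I_r -> 'I_m) : mxhomog 0 (colsub g 1%:M).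
Proof. by move=> i j; rewrite !mxE rpredMn ?dhomog1. Qed.

Lemma mxhomog_mxcol k p (p_ : 'I_p -> nat) m (B_ : forall i, 'M_(p_ i, m)) :
  (forall i, mxhomog k (B_ i)) -> mxhomog k (\mxcol_i B_ i).
Proof. by move=> hB i j; rewrite mxE; apply: hB. Qed.

Lemma dhomog_sign e : ((-1) ^+ e : {mpoly R[d]}) \is 0.-homog.
Proof.
have hN1 : (-1 : {mpoly R[d]}) \is 0.-homog by rewrite rpredN dhomog1.
by have := dhomogMn e hN1; rewrite mul0n.
Qed.

Lemma dhomog_prod_ord k r (F : 'I_r -> {mpoly R[d]}) :
  (forall i, F i \is k.-homog) -> \prod_(i < r) F i \is (r * k).-homog.
Proof.
elim: r F => [|r IH] F hF; first by rewrite big_ord0 dhomog1.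
by rewrite big_ord_recr mulSnr; apply: dhomogM; [apply: IH => i|]; apply: hF.
Qed.

Lemma dhomog_det k r (M : 'M_r) : mxhomog k M -> \det M \is (r * k).-homog.
Proof.
move=> hM; apply: rpred_sum => s _; rewrite -[(r * k)%N]add0n.
by rewrite dhomogM ?dhomog_sign ?dhomog_prod_ord.
Qed.

Lemma mxhomog_adj k r (M : 'M_r.+1) : mxhomog k M -> mxhomog (r * k) (\adj M).
Proof.
move=> hM i j; rewrite mxE -[(r * k)%N]add0n dhomogM ?dhomog_sign //.
by apply: (dhomog_det (r := r)) => a b; rewrite !mxE.
Qed.

Lemma mxhomog_adjker k n m r (A : 'M_(n, m)) (P : 'M_(r, n)) (Q : 'M_(m, r)) :
  mxhomog k A -> mxhomog 0 P -> mxhomog 0 Q -> mxhomog (r * k) (adjker A P Q).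
Proof.
move=> hA hP hQ.
have hS := mxhomogM (addn0 k) (mxhomogM (add0n k) hP hA) hQ.
apply: mxhomogB; first exact/mxhomog_scalar/dhomog_det.
case: r P Q hP hQ hS => [|r] P Q hP hQ hS; first by move=> i j; rewrite mxE big_ord0 dhomog0.
have hAQadj := mxhomogM (esym (mulSn r k)) (mxhomogM (addn0 k) hA hQ) (mxhomog_adj hS).
exact: mxhomogM (addn0 _) hAQadj hP.
Qed.

End HomogeneousMatrix.

Section ComplexEvaluation.
Variables (R : rcfType) (d : nat).
Local Notation ev xi := (@mmap d R _ (real_complex R) xi).

Lemma ev_real (x : 'I_d -> R) (p : {mpoly R[d]}) :
  ev (fun i => (x i)%:C%C) p = (p.@[x])%:C%C.
Proof. by rewrite (mmap_rmorph _ _ (real_complex R)). Qed.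

Lemma mpoly_eq0_of_ev (p : {mpoly R[d]}) : (forall xi, ev xi p = 0) -> p = 0.
Proof.
move=> p0; apply: mpoly_eq0_of_meval => x; apply: (@complexI R).
by rewrite -ev_real p0 rmorph0.
Qed.

(* Multiplying by a coordinate ['X_i] forces the point found to be nonzero. *)
Lemma exists_ev_neq0 (d_gt0 : (0 < d)%N) (D : {mpoly R[d]}) : D != 0 ->
  exists xi, xi <> (fun=> 0) /\ ev xi D != 0.
Proof.
move=> nzD; pose i0 := Ordinal d_gt0.
have nzX : 'X_i0 != 0 :> {mpoly R[d]}.
  by apply/eqP => /(congr1 (meval (fun=> 1))); rewrite mevalXU meval0; apply/eqP/oner_neq0.
have [xi] : exists xi, ev xi (D * 'X_i0) != 0.
  apply: NNPP => /not_ex_all_not nev; move/eqP: (mulf_neq0 nzD nzX); apply.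
  by apply: mpoly_eq0_of_ev => xi; apply/eqP/negbNE/negP/nev.
rewrite rmorphM /= mmapX mmap1U mulf_eq0 negb_or => /andP[evD xi0].
by exists xi; split=> // xi_eq0; rewrite xi_eq0 eqxx in xi0.
Qed.

Lemma map_mx_eq0_generic (d_gt0 : (0 < d)%N) n m (D : {mpoly R[d]}) (M : 'M_(n, m)) :
  D != 0 -> (forall xi, xi <> (fun=> 0) -> ev xi D != 0 -> map_mx (ev xi) M = 0) ->
  M = 0.
Proof.
move=> nzD M0; apply/matrixP => i j; rewrite mxE; apply/eqP/negPn/negP => nzM.
have [xi [xi_neq0]] := exists_ev_neq0 d_gt0 (mulf_neq0 nzM nzD).
rewrite rmorphM mulf_eq0 negb_or => /andP[evM evD].
by move/matrixP: (M0 xi xi_neq0 evD) => /(_ i j); rewrite !mxE; apply/eqP.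
Qed.

Lemma map_rowsub1 xi n r (f : 'I_r -> 'I_n) :
  map_mx (ev xi) (rowsub f 1%:M) = rowsub f 1%:M.
Proof. by rewrite map_mxsub map_mx1. Qed.

Lemma map_colsub1 xi m r (g : 'I_r -> 'I_m) :
  map_mx (ev xi) (colsub g 1%:M) = colsub g 1%:M.
Proof. by rewrite map_mxsub map_mx1. Qed.

(* A nonsingular minor at [xi0] stays nonsingular off the zero set of its determinant. *)
Lemma rank_ev_lower n m (M : 'M[{mpoly R[d]}]_(n, m)) xi0 :
  exists2 D : {mpoly R[d]}, D != 0 &
    forall xi, ev xi D != 0 -> (\rank (map_mx (ev xi0) M) <= \rank (map_mx (ev xi) M))%N.
Proof.
have [f [g unit0]] := rank_unitmx_minor (map_mx (ev xi0) M).
have unit_ev xi : (ev xi (\det (rowsub f 1%:M *m M *m colsub g 1%:M)) != 0) =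
    (rowsub f 1%:M *m map_mx (ev xi) M *m colsub g 1%:M \in unitmx).
  by rewrite -det_map_mx !map_mxM map_rowsub1 map_colsub1 unitmxE unitfE.
exists (\det (rowsub f 1%:M *m M *m colsub g 1%:M)).
  by apply: contraTneq unit0 => D0; rewrite -unit_ev D0 rmorph0 eqxx.
move=> xi; rewrite unit_ev => /mxrank_unit <-.
by rewrite (leq_trans (mxrankM_maxl _ _)) ?mxrankM_maxr.
Qed.

Lemma rank_ev_const_compl (d_gt0 : (0 < d)%N) n m p (M : 'M[{mpoly R[d]}]_(n, m))
    (N : 'M_(p, n)) :
  (forall xi, xi <> (fun=> 0) ->
     (\rank (map_mx (ev xi) N) + \rank (map_mx (ev xi) M))%N = n) ->
  forall xi1 xi2, xi1 <> (fun=> 0) -> xi2 <> (fun=> 0) ->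
    \rank (map_mx (ev xi1) M) = \rank (map_mx (ev xi2) M).
Proof.
move=> compl.
have generic xi1 : xi1 <> (fun=> 0) -> exists2 D : {mpoly R[d]}, D != 0 &
    forall xi, xi <> (fun=> 0) -> ev xi D != 0 ->
      \rank (map_mx (ev xi) M) = \rank (map_mx (ev xi1) M).
  move=> xi1_neq0; have [DM nzDM lowM] := rank_ev_lower M xi1.
  have [DN nzDN lowN] := rank_ev_lower N xi1.
  exists (DM * DN) => [|xi xi_neq0]; first exact: mulf_neq0.
  rewrite rmorphM mulf_eq0 negb_or => /andP[/lowM rkM /lowN rkN].
  by move: (compl _ xi_neq0) (compl _ xi1_neq0); lia.
move=> xi1 xi2 /generic[D1 nzD1 eq1] /generic[D2 nzD2 eq2].
have [xi [xi_neq0]] := exists_ev_neq0 d_gt0 (mulf_neq0 nzD1 nzD2).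
by rewrite rmorphM mulf_eq0 negb_or => /andP[/eq1 <- // /eq2 <-].
Qed.

End ComplexEvaluation.

Section KernelSymbol.
Variables (R : realType) (d : nat) (d_gt0 : (0 < d)%N).
Local Notation ev xi := (@mmap d R _ (real_complex R) xi).

Lemma csymbolE n m (A : symbol R d n m) xi : csymbol A xi = map_mx (ev xi) A.
Proof. by apply/matrixP => i j; rewrite !mxE. Qed.

Lemma csymbol_tr n m (A : symbol R d n m) xi : csymbol A^T xi = (csymbol A xi)^T.
Proof. by apply/matrixP => i j; rewrite !mxE. Qed.

Variables (n m r : nat) (A : symbol R d n m).
Hypothesis rankA : forall xi, xi <> (fun=> 0) -> \rank (csymbol A xi) = r.

Local Notation minor_index := ({ffun 'I_r -> 'I_n} * {ffun 'I_r -> 'I_m})%type.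

(* A minor vanishing identically is discarded: its [adjker] need not annihilate [A]. *)
Definition kerblock (t : minor_index) : 'M[{mpoly R[d]}]_n :=
  let P := rowsub t.1 1%:M in let Q := colsub t.2 1%:M in
  if \det (P *m A *m Q) == 0 then 0 else adjker A P Q.

Definition kersymbol : symbol R d (\sum_(i < #|{: minor_index}|) n) n :=
  \mxcol_i kerblock (enum_val i).

Lemma kerblock_mul0 t : kerblock t *m A = 0.
Proof.
rewrite /kerblock; case: eqP => [_|/eqP nzD]; first by rewrite mul0mx.
apply: (map_mx_eq0_generic d_gt0 nzD) => xi xi_neq0 evD.
rewrite map_mxM map_adjker adjker_mul0 //.
  by rewrite unitmxE unitfE -!map_mxM det_map_mx.
by rewrite -csymbolE rankA.
Qed.

Lemma kersymbol_mul0 : kersymbol *m A = 0.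
Proof. by rewrite mxcol_mul (eq_mxcol (fun i => kerblock_mul0 _)) mxcol0. Qed.

Lemma mxhomog_kersymbol k : mxhomog k A -> mxhomog (r * k) kersymbol.
Proof.
move=> hA; apply: mxhomog_mxcol => i; rewrite /kerblock; case: eqP => _.
  exact: mxhomog0.
by apply: mxhomog_adjker => //; [apply: mxhomog_rowsub1 | apply: mxhomog_colsub1].
Qed.

Lemma kermx_sub_kersymbol xi : xi <> (fun=> 0) ->
  (kermx (csymbol A xi) <= csymbol kersymbol xi)%MS.
Proof.
move=> xi_neq0; have := rank_unitmx_minor (csymbol A xi).
rewrite rankA // => -[f [g unitS]]; pose t : minor_index := ([ffun i => f i], [ffun i => g i]).
have evP : map_mx (ev xi) (rowsub t.1 1%:M) = rowsub f 1%:M.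
  by rewrite map_rowsub1 mxsub_ffunl.
have evQ : map_mx (ev xi) (colsub t.2 1%:M) = colsub g 1%:M.
  by rewrite map_colsub1 mxsub_ffunr.
have evK : map_mx (ev xi) (kerblock t) =
    adjker (csymbol A xi) (rowsub f 1%:M) (colsub g 1%:M).
  rewrite /kerblock ifN; first by rewrite map_adjker evP evQ csymbolE.
  apply: contraTneq unitS => D0.
  by rewrite unitmxE -evP -evQ csymbolE -!map_mxM det_map_mx D0 rmorph0 unitr0.
apply: submx_trans (kermx_sub_adjker unitS) _.
by rewrite -evK csymbolE map_mxcol -[t]enum_rankK submx_mxcol.
Qed.

Lemma csymbol_kersymbol xi : xi <> (fun=> 0) ->
  (csymbol kersymbol xi == kermx (csymbol A xi))%MS.
Proof.
move=> xi_neq0; rewrite kermx_sub_kersymbol // andbT sub_kermx !csymbolE.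
by rewrite -map_mxM kersymbol_mul0 map_mx0.
Qed.

End KernelSymbol.

Section ImageSymbol.
Variables (R : realType) (d : nat) (d_gt0 : (0 < d)%N) (n m r : nat).
Variable A : symbol R d n m.
Hypothesis rankA : forall xi, xi <> (fun=> 0) -> \rank (csymbol A xi) = r.

Let rankAt xi : xi <> (fun=> 0) -> \rank (csymbol A^T xi) = r.
Proof. by move=> xi_neq0; rewrite csymbol_tr mxrank_tr rankA. Qed.

Definition imsymbol := (kersymbol r A^T)^T.

Lemma imsymbol_mul0 : A *m imsymbol = 0.
Proof. by rewrite -[A]trmxK -trmx_mul kersymbol_mul0 ?trmx0. Qed.

Lemma mxhomog_imsymbol k : mxhomog k A -> mxhomog (r * k) imsymbol.
Proof. by move=> hA; apply/mxhomog_tr/mxhomog_kersymbol/mxhomog_tr. Qed.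

Lemma csymbol_imsymbol xi : xi <> (fun=> 0) ->
  (csymbol A xi == kermx (csymbol imsymbol xi))%MS.
Proof.
move=> xi_neq0; rewrite csymbol_tr; apply: eqmx_kermx_tr.
by rewrite -csymbol_tr; apply: csymbol_kersymbol.
Qed.

End ImageSymbol.

Theorem theorem2p6 (R : realType) (d n m : nat) (A : symbol R d n m) :
  homogeneous_symbol A ->
  ((exists r : nat, forall xi : 'I_d -> complex R,
      xi <> (fun _ => 0) -> \rank (csymbol A xi) = r)
   <->
   (exists (p q : nat) (B : symbol R d p n) (Q : symbol R d m q),
      [/\ homogeneous_symbol B, homogeneous_symbol Q,
          B *m A = 0, A *m Q = 0 &
          forall xi : 'I_d -> complex R, xi <> (fun _ => 0) ->
            (csymbol B xi == kermx (csymbol A xi))%MS /\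
            (csymbol A xi == kermx (csymbol Q xi))%MS])).
Proof.
move=> [k hA]; have [d0|d_gt0] := posnP d.
  subst d; have no_point (xi : 'I_0 -> complex R) : xi <> (fun=> 0) -> False.
    by move=> []; apply: functional_extensionality => -[].
  split=> _; last by exists 0%N => xi /no_point.
  exists 0%N, 0%N, 0, 0; split; rewrite ?mul0mx ?mulmx0 //.
  - by exists 0%N; apply: mxhomog0.
  - by exists 0%N; apply: mxhomog0.
  by move=> xi /no_point.
split=> [[r rankA] | [p [q [B [Q [_ _ _ _ exactBAQ]]]]]].
  exists _, _, (kersymbol r A), (imsymbol r A); split.
  - by exists (r * k)%N; apply: mxhomog_kersymbol.
  - by exists (r * k)%N; apply: mxhomog_imsymbol.
  - exact: kersymbol_mul0.
  - exact: imsymbol_mul0.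
  by move=> xi xi_neq0; rewrite csymbol_kersymbol ?csymbol_imsymbol.
have compl xi : xi <> (fun=> 0) ->
    (\rank (csymbol B xi) + \rank (csymbol A xi))%N = n.
  by move=> /exactBAQ[/eqmx_rank -> _]; rewrite mxrank_ker subnK ?rank_leq_row.
have one_neq0 : (fun=> 1) <> (fun=> 0) :> ('I_d -> complex R).
  by move=> /(congr1 (fun xi => xi (Ordinal d_gt0)))/eqP; rewrite oner_eq0.
exists (\rank (csymbol A (fun=> 1))) => xi xi_neq0.
rewrite !csymbolE; apply: (rank_ev_const_compl d_gt0 (N := B) _ xi_neq0 one_neq0).
by move=> xi' /compl; rewrite !csymbolE.
Qed.
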